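(* Let $\mathscr{C}$ be any class of abstract monoids (closed under isomorphism), $\mathscr{A}$ an alphabet with $|\mathscr{A}| \geq 2$, and $k$ a positive integer. Let $p_n$ be the proportion of ordered monoid presentations over $\mathscr{A}$ with $k$ relations and sum relation length $n$ (respectively, maximum relation length $n$) which present monoids in $\mathscr{C}$, and let $q_n$ be the corresponding proportion of (unordered) monoid presentations over $\mathscr{A}$ with $k$ relations and sum (respectively, maximum) relation length $n$. Then $p_n - q_n \to 0$ as $n \to \infty$.
   Context: A monoid presentation $\langle \mathscr{A} \mid \mathscr{R} \rangle$ consists of an alphabet $\mathscr{A}$ and a set $\mathscr{R}$ of $k$ pairs of words over $\mathscr{A}$ (its relations); an ordered monoid presentation is the same except that $\mathscr{R}$ is a sequence of $k$ pairs of words. The monoid presented is $\mathscr{A}^*$ modulo the smallest congruence containing the relations. The sum relation length is the total length of all words forming sides of relations; the maximum relation length is the length of the longest such word. *)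

From mathcomp Require Import all_boot all_order all_algebra.
Set Implicit Arguments. Unset Strict Implicit. Unset Printing Implicit Defensive.
Import Order.TTheory GRing.Theory Num.Theory.
From Stdlib Require Import ClassicalEpsilon.

Definition asb (P : Prop) : bool :=
  if excluded_middle_informative P then true else false.

Record AbsMonoid := MkMonoid {
  mcarrier :> Type;
  mmul : mcarrier -> mcarrier -> mcarrier;
  mone : mcarrier;
  mmulA : forall x y z, mmul x (mmul y z) = mmul (mmul x y) z;
  mmul1l : forall x, mmul mone x = x;
  mmul1r : forall x, mmul x mone = x }.

Definition is_hom (M N : AbsMonoid) (f : M -> N) : Prop :=
  f (mone M) = mone N /\ forall x y, f (mmul x y) = mmul (f x) (f y).

Definition isomorphic (M N : AbsMonoid) : Prop :=
  exists f : M -> N, is_hom f /\ bijective f.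

Definition iso_closed (C : AbsMonoid -> Prop) : Prop :=
  forall M N : AbsMonoid, isomorphic M N -> C M -> C N.

Section Presentations.
Variable A : finType.

Definition word := seq A.
Definition relation := (word * word)%type.

Definition is_congruence (rho : word -> word -> Prop) : Prop :=
  [/\ forall u, rho u u,
      forall u v, rho u v -> rho v u,
      forall u v w, rho u v -> rho v w -> rho u w
    & forall u v x y, rho u v -> rho (x ++ u ++ y) (x ++ v ++ y)].

Definition cong_gen (R : seq relation) (u v : word) : Prop :=
  forall rho : word -> word -> Prop, is_congruence rho ->
    (forall r, r \in R -> rho r.1 r.2) -> rho u v.

(* M is (isomorphic to) the monoid presented by <A | R>, i.e. A^* / cong_gen R:
   there is a surjective monoid homomorphism A^* -> M whose kernel is cong_gen R. *)
Definition presents (R : seq relation) (M : AbsMonoid) : Prop :=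
  exists f : word -> M,
    [/\ f [::] = mone M,
        (forall u v, f (u ++ v) = mmul (f u) (f v)),
        (forall m : M, exists w, f w = m)
      & (forall u v, f u = f v <-> cong_gen R u v)].

Definition presents_in (C : AbsMonoid -> Prop) (R : seq relation) : Prop :=
  exists M : AbsMonoid, presents R M /\ C M.

Inductive len_kind := SumLen | MaxLen.

Definition pres_len (lk : len_kind) (R : seq relation) : nat :=
  match lk with
  | SumLen => \sum_(r <- R) (size r.1 + size r.2)
  | MaxLen => \max_(r <- R) maxn (size r.1) (size r.2)
  end.

(* Words of length at most n (finite type); any presentation of sum or
   maximum relation length n only involves such words. *)
Definition bword (n : nat) := {m : 'I_n.+1 & m.-tuple A}.
Definition bword_val n (w : bword n) : word := tval (tagged w).
Definition brel (n : nat) := (bword n * bword n)%type.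
Definition brel_val n (r : brel n) : relation := (bword_val r.1, bword_val r.2).

Definition opres_rels n k (t : k.-tuple (brel n)) : seq relation :=
  map (@brel_val n) t.
Definition upres_rels n (S : {set brel n}) : seq relation :=
  map (@brel_val n) (enum S).

Definition ordered_all (lk : len_kind) (k n : nat) : {set k.-tuple (brel n)} :=
  [set t : k.-tuple (brel n) | pres_len lk (opres_rels t) == n].
Definition ordered_in (C : AbsMonoid -> Prop) (lk : len_kind) (k n : nat)
  : {set k.-tuple (brel n)} :=
  [set t : k.-tuple (brel n) | (pres_len lk (opres_rels t) == n) && asb (presents_in C (opres_rels t))].

Definition unordered_all (lk : len_kind) (k n : nat) : {set {set brel n}} :=
  [set S : {set brel n} | (#|S| == k) && (pres_len lk (upres_rels S) == n)].
Definition unordered_in (C : AbsMonoid -> Prop) (lk : len_kind) (k n : nat)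
  : {set {set brel n}} :=
  [set S : {set brel n} | [&& #|S| == k, pres_len lk (upres_rels S) == n
              & asb (presents_in C (upres_rels S))]].

Definition p_prop C lk k n : rat :=
  (#|ordered_in C lk k n|%:R / #|ordered_all lk k n|%:R)%R.
Definition q_prop C lk k n : rat :=
  (#|unordered_in C lk k n|%:R / #|unordered_all lk k n|%:R)%R.

End Presentations.

From mathcomp Require Import all_boot all_order all_algebra all_fingroup.
From mathcomp Require Import zify ring lra.
From Stdlib Require Import ClassicalEpsilon.

Set Implicit Arguments. Unset Strict Implicit. Unset Printing Implicit Defensive.

(* Ordered presentations with k distinct relations correspond k!-to-1 to unordered
   presentations with the same length and the same presented monoid, so |p_n - q_n| is
   at most the proportion of ordered presentations of length n with a repeated relation.
   That proportion is O(1/m_n) for some m_n -> oo: if relation j repeats relation i, it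
   can be altered in m_n ways that keep the length n and can be undone given a pattern
   from a set of bounded size.  For the maximum length, overwrite the left side of j by
   any word of length n (m_n = |A|^n); for the sum length, move the last x < n/(2k)
   letters of some side of length >= n/(2k) of another relation onto j (such a side
   exists because the 2k sides add up to n). *)

Definition rel_size (A : Type) (r : seq A * seq A) := size r.1 + size r.2.

Section BoundedPresentations.
Variables (A : finType) (a0 : A) (n k : nat).

Definition fits (r : relation A) := (size r.1 <= n) && (size r.2 <= n).

Definition to_bword (w : word A) : bword A n :=
  Tagged (fun m : 'I_n.+1 => m.-tuple A) [tuple nth a0 w i | i < inord (size w)].

Lemma to_bwordK w : size w <= n -> bword_val (to_bword w) = w.
Proof.
move=> hw; rewrite /bword_val /= (map_comp (nth a0 w) val) val_enum_ord inordK //.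
exact: mkseq_nth.
Qed.

Lemma bword_val_inj : injective (@bword_val A n).
Proof.
move=> [m1 t1] [m2 t2]; rewrite /bword_val /= => e.
have em : m1 = m2 by apply: val_inj; rewrite /= -(size_tuple t1) -(size_tuple t2) e.
by subst m2; congr Tagged; apply: val_inj.
Qed.

Lemma size_bword (w : bword A n) : size (bword_val w) <= n.
Proof. by case: w => m t; rewrite /bword_val /= size_tuple -ltnS. Qed.

Definition to_brel (r : relation A) : brel A n := (to_bword r.1, to_bword r.2).

Lemma to_brelK r : fits r -> brel_val (to_brel r) = r.
Proof. by case: r => u v /andP[hu hv]; rewrite /brel_val /= !to_bwordK. Qed.

Lemma brel_val_inj : injective (@brel_val A n).
Proof. by move=> [u1 v1] [u2 v2] [/bword_val_inj -> /bword_val_inj ->]. Qed.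

Lemma fits_brel_val (r : brel A n) : fits (brel_val r).
Proof. by rewrite /fits !size_bword. Qed.

Definition rels (t : k.-tuple (brel A n)) (q : 'I_k) : relation A := brel_val (tnth t q).

Definition pres_of (F : 'I_k -> relation A) : k.-tuple (brel A n) :=
  [tuple to_brel (F q) | q < k].

Lemma rels_pres_of F : (forall q, fits (F q)) -> rels (pres_of F) =1 F.
Proof. by move=> hF q; rewrite /rels tnth_mktuple to_brelK. Qed.

Lemma rels_inj t1 t2 : rels t1 =1 rels t2 -> t1 = t2.
Proof. by move=> e; apply: eq_from_tnth => q; apply: brel_val_inj; apply: e. Qed.

Lemma pres_len_sumE (t : k.-tuple (brel A n)) :
  pres_len SumLen (opres_rels t) = \sum_(q < k) rel_size (rels t q).
Proof. by rewrite /= big_map big_tuple. Qed.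

Lemma pres_len_maxE (t : k.-tuple (brel A n)) :
  pres_len MaxLen (opres_rels t) = \max_(q < k) maxn (size (rels t q).1) (size (rels t q).2).
Proof. by rewrite /= big_map big_tuple. Qed.

Lemma repeated_rels (t : k.-tuple (brel A n)) :
  ~~ uniq t -> exists i j, i != j /\ rels t i = rels t j.
Proof.
move=> /tuple_uniqP not_inj.
case: (pickP (fun ij : 'I_k * 'I_k => (ij.1 != ij.2) && (tnth t ij.1 == tnth t ij.2))).
  by move=> [i j] /andP[ne /eqP e]; exists i, j; rewrite /rels e.
move=> none; case: not_inj => i j e; apply/eqP; apply: contraFT (none (i, j)) => ne.
by rewrite /= ne e eqxx.
Qed.

End BoundedPresentations.

Lemma leq_card_mul_coding (X W P : finType) (B All : {set X})
    (good : P -> X -> bool) (f : P -> X -> W -> X) :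
  (forall x, x \in B -> exists p, good p x) ->
  (forall p x w, x \in B -> good p x -> f p x w \in All) ->
  (forall p x1 x2 w1 w2, x1 \in B -> x2 \in B -> good p x1 -> good p x2 ->
     f p x1 w1 = f p x2 w2 -> x1 = x2 /\ w1 = w2) ->
  #|B| * #|W| <= #|P| * #|All|.
Proof.
move=> has_good f_All f_inj.
have [-> | [x0 hx0]] := set_0Vmem B; first by rewrite cards0.
have [p0 _] := has_good x0 hx0.
pose pat x := odflt p0 [pick p | good p x].
have good_pat x : x \in B -> good (pat x) x.
  move=> hx; rewrite /pat; case: pickP => [//|none].
  by have [p] := has_good x hx; rewrite none.
pose code (xw : X * W) := (pat xw.1, f (pat xw.1) xw.1 xw.2).
rewrite -cardsT -(cardsT P) -!cardsX -(card_in_imset (f := code)); last first.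
  move=> [x1 w1] [x2 w2]; rewrite !inE /= !andbT => h1 h2 [e1 e2].
  have g2 := good_pat _ h2; rewrite -e1 in e2 g2.
  by have [-> ->] := f_inj _ _ _ w1 w2 h1 h2 (good_pat _ h1) g2 e2.
apply/subset_leq_card/subsetP => y /imsetP[[x w]]; rewrite !inE /= andbT => hx ->.
by rewrite f_All ?good_pat.
Qed.

Section SideTransfer.
Variables (T : Type) (I : finType).
Notation rel := (seq T * seq T)%type.

Definition side (e : bool) (r : rel) := if e then r.1 else r.2.
Definition set_side (e : bool) (r : rel) (w : seq T) : rel := if e then (w, r.2) else (r.1, w).

Lemma set_sideK e r a b : set_side e (set_side e r a) b = set_side e r b.
Proof. by case: e. Qed.

Lemma set_side_id e r : set_side e r (side e r) = r.
Proof. by case: e; case: r. Qed.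

Lemma side_set_side e r w : side e (set_side e r w) = w.
Proof. by case: e. Qed.

Lemma side_set_sideN e r w : side e (set_side (~~ e) r w) = side e r.
Proof. by case: e. Qed.

Lemma side_set_sideNr e r w : side (~~ e) (set_side e r w) = side (~~ e) r.
Proof. by case: e. Qed.

Lemma rel_size_side e r : rel_size r = size (side e r) + size (side (~~ e) r).
Proof. by case: e; rewrite /rel_size //= addnC. Qed.

Definition transfer (j g : I) (e : bool) (x : nat) (F : I -> rel) (q : I) : rel :=
  let u := side e (F g) in
  if q == j then set_side (~~ e) (F j) (side (~~ e) (F j) ++ drop (size u - x) u)
  else if q == g then set_side e (F g) (take (size u - x) u) else F q.

Lemma sum_transfer j g e x F : g != j -> x <= size (side e (F g)) ->
  \sum_q rel_size (transfer j g e x F q) = \sum_q rel_size (F q).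
Proof.
move=> gj hx; rewrite (bigD1 j) // (bigD1 g) //= [in RHS](bigD1 j) // [in RHS](bigD1 g) //=.
rewrite (eq_bigr (fun q => rel_size (F q))); last first.
  by move=> q /andP[qj qg]; rewrite /transfer (negbTE qj) (negbTE qg).
rewrite /transfer eqxx (negbTE gj) eqxx (rel_size_side e (F g)) (rel_size_side e (F j)).
rewrite (rel_size_side e (set_side _ _ _)) (rel_size_side e (set_side e _ _)).
rewrite side_set_sideN side_set_side side_set_side side_set_sideNr size_cat size_drop.
rewrite size_takel ?leq_subr //; set s := \sum_(_ | _) _; lia.
Qed.

(* Relation [j] duplicated relation [i], and only side [e] of [i] may have been shortened. *)
Lemma transfer_restore_dup i j g e x F : i != j -> F i = F j ->
  set_side e (transfer j g e x F i) (side e (transfer j g e x F j)) = F j.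
Proof.
move=> ij Fij; rewrite /transfer eqxx (negbTE ij) side_set_sideN.
by case: eqP => [<-|_]; rewrite ?set_sideK Fij set_side_id.
Qed.

Lemma transfer_inj i j g e x1 x2 F1 F2 : i != j -> g != j ->
  F1 i = F1 j -> F2 i = F2 j ->
  x1 <= size (side e (F1 g)) -> x2 <= size (side e (F2 g)) ->
  transfer j g e x1 F1 =1 transfer j g e x2 F2 -> F1 =1 F2 /\ x1 = x2.
Proof.
move=> ij gj F1ij F2ij hx1 hx2 eG.
have Fj : F1 j = F2 j.
  rewrite -(transfer_restore_dup g e x1 ij F1ij) -(transfer_restore_dup g e x2 ij F2ij).
  by rewrite !eG.
set u1 := side e (F1 g); set u2 := side e (F2 g).
have := eG j; rewrite /transfer eqxx => /(congr1 (side (~~ e))); rewrite !side_set_side Fj.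
move=> /(congr1 (drop (size (side (~~ e) (F2 j))))); rewrite !drop_size_cat // => edrop.
have ex : x1 = x2 by have := congr1 size edrop; rewrite !size_drop; lia.
have := eG g; rewrite /transfer (negbTE gj) eqxx -/u1 -/u2 => eg.
have eu : u1 = u2.
  have := congr1 (side e) eg; rewrite !side_set_side => etake.
  by rewrite -(cat_take_drop (size u1 - x1) u1) etake edrop cat_take_drop.
split=> // q; case: (eqVneq q j) => [-> //|qj]; case: (eqVneq q g) => [->|qg].
  have split_g r w : r = set_side e (set_side e r w) (side e r) by rewrite set_sideK set_side_id.
  rewrite (split_g (F1 g) (take (size u1 - x1) u1)) (split_g (F2 g) (take (size u2 - x2) u2)).
  by rewrite -/u1 -/u2 eg eu.
by have := eG q; rewrite /transfer (negbTE qj) (negbTE qg).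
Qed.

Definition overwrite (j : I) (w : seq T) (F : I -> rel) (q : I) : rel :=
  if q == j then (w, (F j).2) else F q.

Lemma overwrite_inj i j w1 w2 F1 F2 : i != j -> F1 i = F1 j -> F2 i = F2 j ->
  overwrite j w1 F1 =1 overwrite j w2 F2 -> F1 =1 F2 /\ w1 = w2.
Proof.
move=> ij F1ij F2ij eG.
have Fj : F1 j = F2 j by have := eG i; rewrite /overwrite (negbTE ij) F1ij F2ij.
split; last by have := eG j; rewrite /overwrite eqxx => -[].
by move=> q; case: (eqVneq q j) => [-> //|qj]; have := eG q; rewrite /overwrite (negbTE qj).
Qed.

Lemma long_side_elsewhere (F : I -> rel) i j N : i != j -> F i = F j ->
  \sum_q rel_size (F q) = N -> exists g e, g != j /\ N %/ (2 * #|I|) <= size (side e (F g)).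
Proof.
move=> ij Fij sumN; set S := N %/ (2 * #|I|).
case: (boolP [exists g, exists e, (g != j) && (S <= size (side e (F g)))]).
  by move=> /existsP[g /existsP[e /andP[gj hS]]]; exists g, e.
rewrite negb_exists => /forallP short; exfalso.
have shortP g e : g != j -> size (side e (F g)) < S.
  by move=> gj; have /existsPn/(_ e) := short g; rewrite negb_and gj ltnNge.
have S_gt0 : 0 < S by apply: leq_ltn_trans (leq0n _) (shortP i true ij).
have rel_small q : rel_size (F q) <= 2 * (S - 1).
  have [g [gj ->]] : exists g, g != j /\ F q = F g.
    by case: (eqVneq q j) => [->|qj]; [exists i; rewrite Fij | exists q].
  by have := shortP g true gj; have := shortP g false gj; rewrite /rel_size /side; lia.
have : N <= #|I| * (2 * (S - 1)).
  by rewrite -sumN -sum_nat_const; apply: leq_sum => q _; exact: rel_small.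
have I_gt0 : 0 < #|I| by apply/card_gt0P; exists i.
have := leq_divM N (2 * #|I|); rewrite -/S; nia.
Qed.

End SideTransfer.

Definition ordered_rep (A : finType) lk k n : {set k.-tuple (brel A n)} :=
  [set t in ordered_all A lk k n | ~~ uniq t].

Section RepeatedRelations.
Variables (A : finType) (a0 : A) (k n : nat).

Lemma fits_of_sum (I : finType) (F : I -> relation A) q :
  \sum_q rel_size (F q) <= n -> fits n (F q).
Proof.
rewrite (bigD1 q) //= => /(leq_trans (leq_addr _ _)) h.
by apply/andP; split; apply: leq_trans h; rewrite ?leq_addr ?leq_addl.
Qed.

Lemma fits_overwrite (j : 'I_k) (w : n.-tuple A) (t : k.-tuple (brel A n)) q :
  fits n (overwrite j w (rels t) q).
Proof.
rewrite /overwrite; case: eqP => _; last exact: fits_brel_val.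
by rewrite /fits size_tuple leqnn; case/andP: (fits_brel_val (tnth t j)).
Qed.

Lemma card_ordered_rep_max :
  #|ordered_rep A MaxLen k n| * #|A| ^ n <= k * k * #|ordered_all A MaxLen k n|.
Proof.
have -> : k * k = #|{: 'I_k * 'I_k}| by rewrite card_prod card_ord.
rewrite -card_tuple.
apply: (leq_card_mul_coding
  (good := fun (ij : 'I_k * 'I_k) t => (ij.1 != ij.2) && (rels t ij.1 == rels t ij.2))
  (f := fun ij t (w : n.-tuple A) => pres_of a0 n (overwrite ij.2 w (rels t)))).
- move=> t; rewrite inE => /andP[_ /repeated_rels[i [j [ij e]]]].
  by exists (i, j); rewrite /= ij e eqxx.
- move=> [i j] t w _ _ /=.
  rewrite inE pres_len_maxE.
  under eq_bigr => q _ do rewrite (rels_pres_of a0 (fits_overwrite j w t)).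
  rewrite eqn_leq; apply/andP; split.
    by apply/bigmax_leqP => q _; rewrite geq_max; exact: fits_overwrite.
  by apply: (bigmax_sup j) => //; rewrite /overwrite eqxx size_tuple leq_maxl.
move=> [i j] t1 t2 w1 w2 _ _ /andP[/= ij /eqP e1] /andP[_ /eqP e2] et.
have eF : overwrite j w1 (rels t1) =1 overwrite j w2 (rels t2).
  move=> q; rewrite -(rels_pres_of a0 (fits_overwrite j w1 t1)) et.
  by rewrite (rels_pres_of a0 (fits_overwrite j w2 t2)).
by have [/rels_inj -> /val_inj ->] := overwrite_inj ij e1 e2 eF.
Qed.

Lemma card_ordered_rep_sum :
  #|ordered_rep A SumLen k n| * (n %/ (2 * k))
    <= k * k * k * 2 * #|ordered_all A SumLen k n|.
Proof.
set S := n %/ (2 * k).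
have -> : k * k * k * 2 = #|{: 'I_k * 'I_k * 'I_k * bool}|.
  by rewrite !card_prod card_ord card_bool.
rewrite -[S in _ * S](card_ord S).
pose good (p : 'I_k * 'I_k * 'I_k * bool) (t : k.-tuple (brel A n)) :=
  let: (i, j, g, e) := p in
  [&& i != j, g != j, rels t i == rels t j & S <= size (side e (rels t g))].
have sum_transfer_n p (t : k.-tuple (brel A n)) (x : 'I_S) :
    t \in ordered_rep A SumLen k n -> good p t ->
    let: (i, j, g, e) := p in \sum_q rel_size (transfer j g e x (rels t) q) = n.
  case: p => [[[i j] g] e]; rewrite !inE pres_len_sumE.
  move=> /andP[/eqP sum_n _] /and4P[_ gj _ hS].
  by rewrite sum_transfer // (leq_trans _ hS) // ltnW.
apply: (leq_card_mul_coding (good := good)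
  (f := fun p t (x : 'I_S) =>
     let: (i, j, g, e) := p in pres_of a0 n (transfer j g e x (rels t)))).
- move=> t; rewrite !inE pres_len_sumE => /andP[/eqP sum_n /repeated_rels[i [j [ij e]]]].
  have [g [b [gj]]] := long_side_elsewhere ij e sum_n; rewrite card_ord => hS.
  by exists (i, j, g, b); rewrite /= ij gj e eqxx hS.
- move=> [[[i j] g] e] t x rep_t good_t /=.
  have sum_n := sum_transfer_n (i, j, g, e) t x rep_t good_t.
  rewrite inE pres_len_sumE.
  under eq_bigr => q _ do rewrite (rels_pres_of a0 (fun q => fits_of_sum q (eq_leq sum_n))).
  by rewrite sum_n.
move=> [[[i j] g] e] t1 t2 x1 x2 rep1 rep2 good1 good2 /= et.
have sum1 := sum_transfer_n (i, j, g, e) t1 x1 rep1 good1.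
have sum2 := sum_transfer_n (i, j, g, e) t2 x2 rep2 good2.
move: good1 good2 => /and4P[ij gj /eqP e1 hS1] /and4P[_ _ /eqP e2 hS2].
have eF : transfer j g e x1 (rels t1) =1 transfer j g e x2 (rels t2).
  move=> q; rewrite -(rels_pres_of a0 (fun q => fits_of_sum q (eq_leq sum1))) et.
  by rewrite (rels_pres_of a0 (fun q => fits_of_sum q (eq_leq sum2))).
have hx1 : x1 <= size (side e (rels t1 g)) by apply: leq_trans hS1; apply: ltnW.
have hx2 : x2 <= size (side e (rels t2 g)) by apply: leq_trans hS2; apply: ltnW.
by have [/rels_inj -> /val_inj ->] := transfer_inj ij gj e1 e2 hx1 hx2 eF.
Qed.

End RepeatedRelations.

Lemma card_orderings (T : finType) k (S : {set T}) : #|S| = k ->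
  #|[set t : k.-tuple T | uniq t && ([set x in t] == S)]| = k`!.
Proof.
move=> cardS.
have sizeS : size (enum S) == k by rewrite -cardE cardS.
pose e : k.-tuple T := Tuple sizeS.
have ue : uniq e by exact: enum_uniq.
pose h (s : {perm 'I_k}) : k.-tuple T := [tuple tnth e (s i) | i < k].
have h_inj : injective h.
  move=> s1 s2 eh; apply/permP => i.
  have : tnth (h s1) i = tnth (h s2) i by rewrite eh.
  by rewrite !tnth_mktuple; exact: (tuple_uniqP e ue).
suff -> : [set t : k.-tuple T | uniq t && ([set x in t] == S)] = [set h s | s in setT].
  by rewrite card_imset // cardsT card_Sn.
apply/setP => t; rewrite inE; apply/andP/imsetP.
  move=> [ut /eqP St].
  have /tuple_permP[s hs] : perm_eq t e.
    by apply: uniq_perm => // x; rewrite mem_enum -St inE.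
  by exists s; rewrite ?inE //; apply: val_inj; rewrite /= hs.
move=> [s _ ->].
have pe : perm_eq (h s) e by apply/tuple_permP; exists s.
split; first by rewrite (perm_uniq pe).
by apply/eqP/setP => x; rewrite inE (perm_mem pe) mem_enum.
Qed.

Lemma card_uniq_tuples (T : finType) k (U : {set {set T}}) :
  (forall S, S \in U -> #|S| = k) ->
  #|[set t : k.-tuple T | uniq t && ([set x in t] \in U)]| = k`! * #|U|.
Proof.
move=> cardU.
rewrite -sum1_card (partition_big (fun t : k.-tuple T => [set x in t]) (mem U)) /=; last first.
  by move=> t; rewrite inE => /andP[].
rewrite mulnC -sum_nat_const; apply: eq_bigr => S SU.
rewrite -(card_orderings (cardU S SU)) -sum1_card; apply: eq_bigl => t.
rewrite !inE; case: (uniq t) => //=.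
by case: eqP => [->|]; rewrite ?SU ?andbF ?andbT.
Qed.

Lemma asb_iff (P Q : Prop) : (P <-> Q) -> asb P = asb Q.
Proof.
move=> [PQ QP]; rewrite /asb.
case: excluded_middle_informative => hP; case: excluded_middle_informative => hQ //.
- by case: hQ; apply: PQ.
- by case: hP; apply: QP.
Qed.

Section Unordered.
Variables (A : finType) (C : AbsMonoid -> Prop) (lk : len_kind) (k n : nat).

Lemma presents_in_eq_mem (R1 R2 : seq (relation A)) : R1 =i R2 ->
  presents_in C R1 -> presents_in C R2.
Proof.
move=> eR [M [[f [f1 fM f_onto f_ker]] CM]].
exists M; split => //; exists f; split => // u v.
rewrite f_ker; split=> uv rho cong_rho R_rho; apply: uv => // r rR; apply: R_rho.
  by rewrite -eR.
by rewrite eR.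
Qed.

Lemma pres_len_perm (s1 s2 : seq (relation A)) :
  perm_eq s1 s2 -> pres_len lk s1 = pres_len lk s2.
Proof. by case: lk => pe /=; apply: perm_big. Qed.

Lemma perm_opres_upres (t : k.-tuple (brel A n)) : uniq t ->
  perm_eq (opres_rels t) (upres_rels [set x in t]).
Proof.
move=> ut; apply/perm_map/uniq_perm => //; first exact: enum_uniq.
by move=> x; rewrite mem_enum inE.
Qed.

Lemma card_set_of_uniq (t : k.-tuple (brel A n)) : uniq t -> #|[set x in t]| = k.
Proof. by move=> ut; rewrite cardsE (card_uniqP ut) size_tuple. Qed.

Lemma card_ordered_uniq :
  #|[set t in ordered_all A lk k n | uniq t]| = k`! * #|unordered_all A lk k n|.
Proof.
rewrite -card_uniq_tuples; last by move=> S; rewrite inE => /andP[/eqP].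
apply: eq_card => t; rewrite !inE; case ut: (uniq t); rewrite ?andbF //= andbT.
by rewrite card_set_of_uniq // eqxx (pres_len_perm (perm_opres_upres ut)).
Qed.

Lemma card_ordered_in_uniq :
  #|[set t in ordered_in A C lk k n | uniq t]| = k`! * #|unordered_in A C lk k n|.
Proof.
rewrite -card_uniq_tuples; last by move=> S; rewrite inE => /and3P[/eqP].
apply: eq_card => t; rewrite !inE; case ut: (uniq t); rewrite ?andbF //= andbT.
rewrite card_set_of_uniq // eqxx (pres_len_perm (perm_opres_upres ut)) /=.
have e := perm_mem (perm_opres_upres ut).
by congr (_ && _); apply: asb_iff; split; apply: presents_in_eq_mem => // x; rewrite e.
Qed.

End Unordered.

Lemma card_ordered_rep_bound (A : finType) lk k : 1 < #|A| ->
  exists P, forall n,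
    #|ordered_rep A lk k n| * (n %/ (2 * k)) <= P * #|ordered_all A lk k n|.
Proof.
move=> A_gt1; have [a0 _] : exists a0 : A, a0 \in A by apply/card_gt0P; apply: ltnW.
case: lk; first by exists (k * k * k * 2) => n; exact: card_ordered_rep_sum.
exists (k * k) => n; apply: leq_trans (card_ordered_rep_max a0 k n).
by rewrite leq_mul2l (leq_trans (leq_div _ _)) ?orbT // ltnW // ltn_expl.
Qed.

Import Order.TTheory GRing.Theory Num.Theory.

Section Proportions.
Local Open Scope ring_scope.

Lemma dist_ratios_le (a b c d f : nat) :
  b = (d + f)%N -> (a <= c + f)%N -> (c <= a)%N -> (c <= d)%N ->
  `|a%:R / b%:R - c%:R / d%:R| <= f%:R / b%:R :> rat.
Proof.
move=> hb h1 h2 h3.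
have [d0|dpos] := posnP d.
  have c0 : c = 0%N by apply/eqP; rewrite -leqn0 -d0.
  rewrite c0 mul0r subr0 normrM normr_nat ger0_norm ?invr_ge0 ?ler0n //.
  by apply: ler_wpM2r; rewrite ?invr_ge0 ?ler0n // ler_nat; rewrite c0 in h1.
have bpos : (0 < b)%N by rewrite hb ltn_addr.
have [bR dR] : (0 : rat) < b%:R /\ (0 : rat) < d%:R by rewrite !ltr0n.
have -> : a%:R / b%:R - c%:R / d%:R = (a%:R * d%:R - c%:R * b%:R) / (b%:R * d%:R) :> rat.
  by field; rewrite ?lt0r_neq0.
have -> : f%:R / b%:R = f%:R * d%:R / (b%:R * d%:R) :> rat by field; rewrite ?lt0r_neq0.
rewrite normrM [`|_^-1|]ger0_norm ?invr_ge0 ?mulr_ge0 ?ler0n //.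
apply: ler_wpM2r; first by rewrite invr_ge0 mulr_ge0 ?ler0n.
(* with [b = d + f]: [a d - c b = (a - c) d - c f], both terms lying in [0, f d] *)
move: h1 h2 h3; rewrite hb -!(ler_nat rat) !natrD => h1 h2 h3.
have [c0 f0] : 0 <= c%:R :> rat /\ 0 <= f%:R :> rat by rewrite !ler0n.
by rewrite ler_norml; apply/andP; split; nra.
Qed.

Lemma dist_p_q_le (A : finType) C lk k n :
  `|p_prop A C lk k n - q_prop A C lk k n| <=
  #|ordered_rep A lk k n|%:R / #|ordered_all A lk k n|%:R.
Proof.
rewrite /p_prop; set O := ordered_all A lk k n; set OC := ordered_in A C lk k n.
set D := [set t in O | uniq t]; set DC := [set t in OC | uniq t].
set U := [set t : k.-tuple (brel A n) | uniq t].
have -> : q_prop A C lk k n = #|DC|%:R / #|D|%:R.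
  have fact_neq0 : k`!%:R != 0 :> rat by rewrite pnatr_eq0 -lt0n fact_gt0.
  by rewrite card_ordered_uniq card_ordered_in_uniq !natrM invfM mulrACA mulfV ?mul1r.
apply: dist_ratios_le.
- rewrite -(cardsID U O).
  by congr (_ + _); apply: eq_card => t; rewrite !inE andbC.
- rewrite -(cardsID U OC) leq_add //.
    by apply: eq_leq; apply: eq_card => t; rewrite !inE andbC.
  by apply/subset_leq_card/subsetP => t; rewrite !inE => /and3P[-> -> _].
- by apply/subset_leq_card/subsetP => t; rewrite inE => /andP[].
by apply/subset_leq_card/subsetP => t; rewrite !inE => /andP[/andP[-> _] ->].
Qed.

Lemma ratio_lt_of_leq_mul (P : nat) (eps : rat) : 0 < eps ->
  exists M0, forall M b o : nat, (M0 <= M)%N -> (b * M <= P * o)%N -> b%:R / o%:R < eps.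
Proof.
move=> eps_gt0; set M0 := Num.Def.archi_bound (P%:R / eps).
have M0_gt : P%:R / eps < M0%:R by apply: archi_boundP; rewrite divr_ge0 // ltW.
exists M0 => M b o M0M bMPo.
have [->|o_gt0] := posnP o; first by rewrite invr0 mulr0.
have M_gt0 : (0 < M)%N.
  by rewrite -(ltr0n rat) (le_lt_trans _ (lt_le_trans M0_gt _)) ?ler_nat ?divr_ge0 // ltW.
apply: (@le_lt_trans _ _ (P%:R / M%:R)).
  by rewrite ler_pdivrMr ?ltr0n // mulrAC ler_pdivlMr ?ltr0n // -!natrM ler_nat.
rewrite ltr_pdivrMr ?ltr0n // -ltr_pdivrMl // mulrC.
by apply: lt_le_trans M0_gt _; rewrite ler_nat.
Qed.

End Proportions.

Theorem theorem7 (A : finType) (C : AbsMonoid -> Prop) (k : nat) (lk : len_kind) :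
  iso_closed C -> 1 < #|A| -> 0 < k ->
  forall eps : rat, (0 < eps)%R ->
  exists N : nat, forall n : nat, N <= n ->
    (`|p_prop A C lk k n - q_prop A C lk k n| < eps)%R.
Proof.
move=> _ A_gt1 k_gt0 eps eps_gt0.
have [P rep_small] := card_ordered_rep_bound lk k A_gt1.
have [M0 ratio_lt] := ratio_lt_of_leq_mul P eps_gt0.
exists (2 * k * M0) => n n_ge; apply: le_lt_trans (dist_p_q_le A C lk k n) _.
apply: ratio_lt (rep_small n).
by have := leq_div2r (2 * k) n_ge; rewrite mulKn // muln_gt0 k_gt0.
Qed.
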